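(* Let $G$ be a unicyclic graph of order $n$ with girth $g$ (so $3\le g\le n$). Then $$SO(G)\le 2\sqrt{(n-g+2)^2+4}+(n-g)\sqrt{(n-g+2)^2+1}+2\sqrt2\,(g-2),$$ with equality if and only if $G$ is isomorphic to the graph $U_{n,g}$ obtained by attaching $n-g$ pendent edges to one vertex of the cycle $C_g$.
   Context: For a graph $G$, $d_G(w)$ denotes the degree of vertex $w$, and the Sombor index is $SO(G)=\sum_{ab\in E(G)}\sqrt{d_G(a)^2+d_G(b)^2}$. A unicyclic graph is a connected graph with exactly one cycle; its girth is the length of that cycle. $C_g$ is the cycle on $g$ vertices. *)

From HB Require Import structures.
From mathcomp Require Import all_boot all_order all_algebra.
From mathcomp Require Import reals.
Set Implicit Arguments. Unset Strict Implicit. Unset Printing Implicit Defensive.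
Import Order.TTheory GRing.Theory Num.Theory.

(* A simple graph: vertex type T (finite) and adjacency relation e,
   assumed symmetric and irreflexive in the theorem. *)

Local Open Scope ring_scope.

Definition deg (T : finType) (e : rel T) (x : T) : nat := #|[set y | e x y]|%N.

(* Sombor index: sum over unordered edges {a,b} of sqrt(d(a)^2+d(b)^2);
   each unordered edge is counted twice in the ordered double sum, hence / 2. *)
Definition sombor (R : realType) (T : finType) (e : rel T) : R :=
  (\sum_(x : T) \sum_(y : T | e x y)
      Num.sqrt (((deg e x)%:R : R) ^+ 2 + ((deg e y)%:R : R) ^+ 2)) / 2.

Definition connectedg (T : finType) (e : rel T) : Prop :=
  forall x y : T, connect e x y.

Definition is_graph_cycle (T : finType) (e : rel T) (c : seq T) : Prop :=
  ucycle e c /\ (3 <= size c)%N.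

Definition cycle_edges (T : finType) (c : seq T) : {set {set T}} :=
  [set [set x; next c x] | x in c].

Definition unicyclic_with_cycle (T : finType) (e : rel T) (c : seq T) : Prop :=
  [/\ connectedg e, is_graph_cycle e c &
      forall c', is_graph_cycle e c' -> cycle_edges c' = cycle_edges c].

(* U_{n,g} on vertex set 'I_n: vertices 0..g-1 form the cycle C_g
   (i ~ i+1 mod g), and vertices g..n-1 are pendent vertices attached to 0. *)
Definition Urel (n g : nat) : rel 'I_n := fun i j =>
  [|| [&& (i < g)%N, (j < g)%N &
          (val j == (val i).+1 %% g)%N || (val i == (val j).+1 %% g)%N],
      (val i == 0%N) && (g <= j)%N | (val j == 0%N) && (g <= i)%N].

Definition graph_iso (T1 T2 : finType) (e1 : rel T1) (e2 : rel T2) : Prop :=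
  exists f : T1 -> T2, bijective f /\ forall x y, e2 (f x) (f y) = e1 x y.

Definition sombor_bound (R : realType) (n g : nat) : R :=
  2 * Num.sqrt (((n - g + 2)%N%:R : R) ^+ 2 + 4)
  + (n - g)%N%:R * Num.sqrt (((n - g + 2)%N%:R : R) ^+ 2 + 1)
  + 2 * Num.sqrt 2 * ((g%:R : R) - 2).

Arguments Urel n g : clear implicits.
Arguments sombor_bound R n g : clear implicits.
Arguments sombor R [T] e.

From HB Require Import structures.
From mathcomp Require Import all_boot all_order all_algebra.
From mathcomp Require Import reals ring lra zify.
Import Order.TTheory GRing.Theory Num.Theory.

Set Implicit Arguments. Unset Strict Implicit. Unset Printing Implicit Defensive.

(* Orient the cycle cyclically and every other edge towards the cycle; then
   each vertex x has exactly one out-neighbour parent x and SO(G) is the sum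
   of the weights of the edges {x, parent x}.  Let k = n - g be the number of
   vertices off the cycle.  A tree edge has weight at most sqrt((k+2)^2 + 1),
   since the degrees of its ends add up to at most k + 3.  A cycle edge uv has
   weight at most psi d_u + psi d_v - psi 2, where psi x = sqrt(x^2 + 4);
   summed around the cycle this gives g psi 2 + 2 sum_u (psi d_u - psi 2), and
   by convexity of psi the last sum is at most psi (k + 2) - psi 2, its value
   when all k trees hang at a single cycle vertex.  In the equality case some
   tree edge reaches the bound sqrt((k+2)^2 + 1), which forces a cycle vertex
   of degree k + 2 carrying all other vertices as pendants: G is U_{n,g}. *)

Section SqrtInequalities.
Variable R : rcfType.
Local Open Scope ring_scope.

Lemma ler_sqrtD (A B C D : R) : 0 <= A -> 0 <= B -> 0 <= C -> 0 <= D ->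
  A + B <= C + D -> A * B <= C * D ->
  Num.sqrt A + Num.sqrt B <= Num.sqrt C + Num.sqrt D.
Proof.
move=> A0 B0 C0 D0 leABCD leAB_CD.
have sqA := sqr_sqrtr A0; have sqB := sqr_sqrtr B0.
have sqC := sqr_sqrtr C0; have sqD := sqr_sqrtr D0.
have a0 := sqrtr_ge0 A; have b0 := sqrtr_ge0 B.
have c0 := sqrtr_ge0 C; have d0 := sqrtr_ge0 D.
have le_ab_cd : Num.sqrt A * Num.sqrt B <= Num.sqrt C * Num.sqrt D.
  by rewrite -!sqrtrM // ler_sqrt //; apply: mulr_ge0.
set a := Num.sqrt A in a0 sqA le_ab_cd *; set b := Num.sqrt B in b0 sqB le_ab_cd *.
set c := Num.sqrt C in c0 sqC le_ab_cd *; set d := Num.sqrt D in d0 sqD le_ab_cd *.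
rewrite -sqA -sqB -sqC -sqD in leABCD.
nra.
Qed.

(* [psi x] is the Sombor weight of an edge joining a vertex of degree [x]
   to a vertex of degree 2. *)
Definition psi (x : R) := Num.sqrt (x ^+ 2 + 4).

Lemma psi_midpoint_convex (m : R) : 0 <= m -> 2 * psi (m + 1) <= psi m + psi (m + 2).
Proof.
move=> m0; rewrite /psi.
have p0 : 0 <= m ^+ 2 + 4 by nra.
have p1 : 0 <= (m + 1) ^+ 2 + 4 by nra.
have p2 : 0 <= (m + 2) ^+ 2 + 4 by nra.
(* Cauchy-Schwarz for the vectors (m, 2) and (m + 2, 2). *)
have le_prod : m ^+ 2 + 2 * m + 4 <= Num.sqrt (m ^+ 2 + 4) * Num.sqrt ((m + 2) ^+ 2 + 4).
  rewrite -sqrtrM // -[X in X <= _]ger0_norm; last by nra.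
  by rewrite -sqrtr_sqr ler_sqrt; nra.
have := sqr_sqrtr p0; have := sqr_sqrtr p1; have := sqr_sqrtr p2.
have := sqrtr_ge0 (m ^+ 2 + 4); have := sqrtr_ge0 ((m + 1) ^+ 2 + 4).
have := sqrtr_ge0 ((m + 2) ^+ 2 + 4).
move: le_prod.
set u := Num.sqrt (m ^+ 2 + 4); set v := Num.sqrt ((m + 1) ^+ 2 + 4).
set w := Num.sqrt ((m + 2) ^+ 2 + 4).
move=> *; nra.
Qed.

Lemma psi_increment_le (x : R) (n : nat) : 0 <= x ->
  psi (x + 1) - psi x <= psi (x + n%:R + 1) - psi (x + n%:R).
Proof.
move=> x0; elim: n => [|n IHn]; first by rewrite addr0.
apply: le_trans IHn _.
have := psi_midpoint_convex (addr_ge0 x0 (ler0n R n)).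
have -> : x + n.+1%:R = x + n%:R + 1 by rewrite -addn1 natrD addrA.
have -> : x + n%:R + 1 + 1 = x + n%:R + 2 by rewrite -addrA.
lra.
Qed.

(* The growth of [psi] when a cycle vertex receives [a] neighbours off the cycle. *)
Definition psi_gain (a : nat) := psi (2 + a%:R) - psi 2.

Lemma psi_gain0 : psi_gain 0 = 0.
Proof. by rewrite /psi_gain addr0 subrr. Qed.

Lemma psi_gainS (a : nat) :
  psi_gain a.+1 = psi_gain a + (psi (2 + a%:R + 1) - psi (2 + a%:R)).
Proof. by rewrite /psi_gain -[a.+1]addn1 natrD addrA; lra. Qed.

Lemma psi_gain_superadditive (a b : nat) : psi_gain a + psi_gain b <= psi_gain (a + b).
Proof.
elim: b => [|b IHb]; first by rewrite psi_gain0 addr0 addn0.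
have := psi_increment_le a (addr_ge0 (ler0n R 2) (ler0n R b)).
have -> : psi_gain (a + b.+1) =
    psi_gain (a + b) + (psi (2 + b%:R + a%:R + 1) - psi (2 + b%:R + a%:R)).
  by rewrite addnS psi_gainS natrD [a%:R + _]addrC !addrA.
rewrite psi_gainS; lra.
Qed.

Lemma psi_gain_le (a b : nat) : (a <= b)%N -> psi_gain a <= psi_gain b.
Proof.
move=> le_ab; rewrite /psi_gain lerD2r /psi ler_sqrt; last first.
  by apply: addr_ge0; rewrite ?sqr_ge0.
by rewrite lerD2r ler_sqr ?lerD2l ?ler_nat //; apply: addr_ge0.
Qed.

Lemma psi_gain_sum (I : Type) (s : seq I) (t : I -> nat) :
  \sum_(i <- s) psi_gain (t i) <= psi_gain (\sum_(i <- s) t i)%N.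
Proof.
elim: s => [|i s IHs]; first by rewrite !big_nil psi_gain0.
rewrite !big_cons; apply: le_trans (psi_gain_superadditive _ _); lra.
Qed.

Lemma sqrt_sqrD_le_psi (a b : R) : 2 <= a -> 2 <= b ->
  Num.sqrt (a ^+ 2 + b ^+ 2) <= psi a + psi b - psi 2.
Proof.
move=> a2 b2; rewrite /psi.
suff : Num.sqrt (a ^+ 2 + b ^+ 2) + Num.sqrt (2 ^+ 2 + 4)
   <= Num.sqrt (a ^+ 2 + 4) + Num.sqrt (b ^+ 2 + 4) by lra.
have a2_4 : 4 <= a ^+ 2 by nra.
have b2_4 : 4 <= b ^+ 2 by nra.
by apply: ler_sqrtD; nra.
Qed.

Lemma psi2 : psi 2 = 2 * Num.sqrt 2.
Proof.
rewrite /psi (_ : 2 ^+ 2 + 4 = 2 ^+ 2 * 2 :> R); last by ring.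
by rewrite sqrtrM ?sqr_ge0 // sqrtr_sqr ger0_norm.
Qed.

End SqrtInequalities.

Lemma card_ord_count n (P : pred nat) : #|[set j : 'I_n | P j]| = count P (iota 0 n).
Proof. by rewrite cardsE cardE /enum_mem size_filter -enumT -val_enum_ord count_map. Qed.

Lemma count_pred2_iota (a b n : nat) : a != b -> a < n -> b < n ->
  count (fun m => (m == a) || (m == b)) (iota 0 n) = 2.
Proof.
move=> neq_ab lt_an lt_bn.
have countUI := count_predUI (pred1 a) (pred1 b) (iota 0 n).
rewrite !count_uniq_mem ?iota_uniq // !mem_iota /= !add0n lt_an lt_bn in countUI.
have countI : count (predI (pred1 a) (pred1 b)) (iota 0 n) = 0.
  rewrite (eq_count (a2 := pred0)) ?count_pred0 // => m /=.
  by apply/andP => -[/eqP-> /eqP eq_ab]; rewrite eq_ab eqxx in neq_ab.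
by rewrite countI addn0 in countUI; rewrite -[2]/(true + true) -countUI.
Qed.

Lemma deg_Urel0 n g (z : 'I_n) : z = 0 :> nat -> 3 <= g -> g <= n ->
  deg (Urel n g) z = n - g + 2.
Proof.
move=> z0 g3 le_gn; have g0 : 0 < g := ltnW (ltnW g3).
pose P m := [|| m == 1, m == g.-1 | g <= m].
have -> : deg (Urel n g) z = #|[set j : 'I_n | P j]|.
  apply: eq_card => j; rewrite !inE /Urel /= z0 /P (modn_small (m := 1)); last by lia.
  have [lt_jg|le_gj] := ltnP j g; last by rewrite !orbT.
  have -> : (0 == j.+1 %% g) = (val j == g.-1).
    have [<-|neq_j1g] := eqVneq j.+1 g; first by rewrite modnn /= !eqxx.
    have lt_j1g : j.+1 < g by rewrite ltn_neqAle neq_j1g.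
    by rewrite modn_small //; apply/esym/negbTE; rewrite neq_ltn ltn_predRL lt_j1g.
  by rewrite g0 /= leqNgt g0 andbF !orbF.
rewrite card_ord_count -{1}(subnKC le_gn) iotaD count_cat add0n.
have -> : count P (iota 0 g) = 2.
  have neq_1g : 1 != g.-1 by rewrite neq_ltn ltn_predRL g3.
  rewrite -(@count_pred2_iota _ _ g neq_1g) ?ltn_predL ?g0 ?(ltnW g3) //.
  apply: eq_in_count => m; rewrite mem_iota => /andP[_ lt_mg].
  by rewrite /P orbA (leqNgt g m) lt_mg orbF.
have -> : count P (iota g (n - g)) = n - g.
  rewrite -[RHS](size_iota g (n - g)) -count_predT; apply: eq_in_count => m.
  by rewrite mem_iota /P => /andP[-> _]; rewrite !orbT.
by rewrite addnC.
Qed.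

Lemma deg_bij (T1 T2 : finType) (e1 : rel T1) (e2 : rel T2) (f : T1 -> T2) :
  bijective f -> (forall x y, e2 (f x) (f y) = e1 x y) ->
  forall x, deg e2 (f x) = deg e1 x.
Proof.
move=> bij_f f_hom x; rewrite /deg -(card_imset _ (bij_inj bij_f)).
have [g fK gK] := bij_f.
apply: eq_card => y; rewrite inE; apply/idP/imsetP => [e2xy|[z]].
  by exists (g y); rewrite ?gK // inE -f_hom gK.
by rewrite inE => e1xz ->; rewrite f_hom.
Qed.

Lemma index_next (T : eqType) (s : seq T) x : uniq s -> x \in s ->
  index (next s x) s = (index x s).+1 %% size s.
Proof.
case: s => [//|y s] uniq_s xs; rewrite next_nth xs.
have lt_x : index x (y :: s) < (size s).+1 by rewrite -[(size s).+1]/(size (y :: s)) index_mem.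
have [lt_xs|le_sx] := ltnP (index x (y :: s)) (size s).
  by rewrite -[nth y s _]/(nth y (y :: s) (index x (y :: s)).+1) index_uniq //= modn_small.
have -> : index x (y :: s) = size s by apply/eqP; rewrite eqn_leq le_sx -ltnS lt_x.
by rewrite nth_default //= eqxx modnn.
Qed.

Lemma set2_eq (T : finType) (x y a b : T) : x != y -> [set x; y] = [set a; b] ->
  (a == x) && (b == y) || (a == y) && (b == x).
Proof.
move=> neq_xy eq_xy_ab.
have : x \in [set a; b] by rewrite -eq_xy_ab set21.
have : y \in [set a; b] by rewrite -eq_xy_ab set22.
rewrite !inE => /orP[]/eqP ya /orP[]/eqP xa; subst; rewrite ?eqxx ?orbT //.
all: by rewrite eqxx in neq_xy.
Qed.

Lemma leq_card_disjoint (T : finType) (A B C : {set T}) :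
  [disjoint A & B] -> A :|: B \subset C -> #|A| + #|B| <= #|C|.
Proof.
move=> disj_AB sub_ABC; have [_] := leq_card_setU A B; rewrite disj_AB => /eqP <-.
exact: subset_leq_card.
Qed.

Lemma next_cons_last (T : eqType) (u : T) (q : seq T) :
  uniq (u :: q) -> next (u :: q) (last u q) = u.
Proof. by move=> uniq_uq; rewrite next_nth mem_last index_last // nth_default. Qed.

Section UnicyclicGraph.
Variables (T : finType) (e : rel T).
Hypotheses (e_sym : symmetric e) (e_irr : irreflexive e).
Variable c : seq T.
Hypothesis c_unicyclic : unicyclic_with_cycle e c.

Lemma c_uniq : uniq c.
Proof. by case: c_unicyclic => _ [/andP[]]. Qed.

Lemma c_cycle : cycle e c.
Proof. by case: c_unicyclic => _ [/andP[]]. Qed.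

Lemma size_c_ge3 : 3 <= size c.
Proof. by case: c_unicyclic => _ []. Qed.

Lemma adj_neq x y : e x y -> x != y.
Proof. by apply: contraTneq => ->; rewrite e_irr. Qed.

Lemma c_nonempty : exists x0, x0 \in c.
Proof. by move: size_c_ge3; case: c => // x0 s _; exists x0; rewrite mem_head. Qed.

Fixpoint near_cycle (i : nat) (x : T) : bool :=
  if i is j.+1 then near_cycle j x || [exists y, e x y && near_cycle j y] else x \in c.

Lemma near_cycle_exists x : exists i, near_cycle i x.
Proof.
have [x0 x0c] := c_nonempty.
case: c_unicyclic => /(_ x x0) /connectP[p xp x0E] _ _; rewrite x0E {x0E} in x0c.
elim: p x xp x0c => [|y p IHp] x /=; first by exists 0.
case/andP=> exy /IHp /[apply] -[i near_i]; exists i.+1.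
by apply/orP; right; apply/existsP; exists y; rewrite exy.
Qed.

Definition cdist x := ex_minn (near_cycle_exists x).

Lemma near_cycle_cdist x : near_cycle (cdist x) x.
Proof. by rewrite /cdist; case: ex_minnP. Qed.

Lemma cdist_min x i : near_cycle i x -> cdist x <= i.
Proof. by rewrite /cdist; case: ex_minnP => m _ min_m /min_m. Qed.

Lemma cdist_eq0 x : (cdist x == 0) = (x \in c).
Proof.
apply/idP/idP => [/eqP cdist0|xc]; first by have := near_cycle_cdist x; rewrite cdist0.
by rewrite -leqn0; apply: cdist_min.
Qed.

Lemma cdist_step x : x \notin c -> exists y, e x y && (cdist y < cdist x).
Proof.
rewrite -cdist_eq0; have := near_cycle_cdist x.
case dx: (cdist x) => [|m] //= /orP[near_m _|/existsP[y /andP[exy near_y]]].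
  by have := cdist_min near_m; rewrite dx ltnn.
by exists y; rewrite exy ltnS cdist_min.
Qed.

Definition parent x := if x \in c then next c x
  else odflt x [pick y | e x y && (cdist y < cdist x)].

Lemma parent_cycle x : x \in c -> parent x = next c x.
Proof. by rewrite /parent => ->. Qed.

Lemma parent_in_cycle x : x \in c -> parent x \in c.
Proof. by move=> xc; rewrite parent_cycle // mem_next. Qed.

Lemma parent_off_cycle x : x \notin c -> e x (parent x) && (cdist (parent x) < cdist x).
Proof.
move=> xNc; rewrite /parent (negbTE xNc).
by case: pickP => [//|none]; have [y] := cdist_step xNc; rewrite none.
Qed.

Lemma adj_parent x : e x (parent x).
Proof.
have [xc|xNc] := boolP (x \in c); first by rewrite parent_cycle // next_cycle ?c_cycle.
by case/andP: (parent_off_cycle xNc).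
Qed.

Lemma cdist_parent x : x \notin c -> cdist (parent x) < cdist x.
Proof. by case/parent_off_cycle/andP. Qed.

Lemma connect_to_cycle (r : rel T) : (forall x, x \notin c -> r x (parent x)) ->
  forall x, exists2 s, s \in c & connect r x s.
Proof.
move=> r_parent x; elim: {x}(cdist x).+1 {-2}x (ltnSn (cdist x)) => // n IHn x.
have [xc _|xNc lt_xn] := boolP (x \in c); first by exists x.
have [s sc parent_s] := IHn _ (leq_trans (cdist_parent xNc) lt_xn).
by exists s; rewrite // (connect_trans (connect1 (r_parent x xNc))).
Qed.

Lemma connect_cycle (r : rel T) : (forall a, a \in c -> r a (next c a)) ->
  {in c &, forall s t, connect r s t}.
Proof.
move=> r_next s t sc tc; have [i s' rot_c] := rot_to sc.
have uniq_ss' : uniq (s :: s') by rewrite -rot_c rot_uniq c_uniq.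
have next_ss' : path (frel (next c)) s s'.
  have := cycle_next uniq_ss'; rewrite /= rcons_path => /andP[path_s' _].
  apply: sub_path path_s' => a b /eqP<-; apply/eqP.
  by rewrite -rot_c (next_rot i c_uniq).
have path_r : path r s s'.
  apply: (@sub_in_path _ (mem c)) next_ss' => [a b ac _ /eqP<-|]; first exact: r_next ac.
  by apply/allP => z; rewrite -rot_c mem_rot.
by apply: (path_connect path_r); rewrite -rot_c mem_rot.
Qed.

Lemma cycle_edge_of_detour u v : e u v ->
  connect [rel a b | e a b && ([set a; b] != [set u; v])] u v ->
  [set u; v] \in cycle_edges c.
Proof.
move=> euv /connectP[p path_p last_p].
move: last_p; case: (shortenP path_p) => q path_q uniq_uq _ last_q.
have size_q : 2 <= size q.
  case: q path_q last_q {uniq_uq} => [|a [|b q]] //=.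
    by move=> _ vu; rewrite vu e_irr in euv.
  by rewrite andbT => /andP[_ neq] av; rewrite av eqxx in neq.
have uq_cycle : is_graph_cycle e (u :: q).
  split=> //; apply/andP; split=> //=; rewrite rcons_path -last_q e_sym euv andbT.
  by apply: sub_path path_q => a b /andP[].
case: c_unicyclic => _ _ /(_ _ uq_cycle) <-; apply/imsetP; exists v.
  by rewrite last_q mem_last.
by rewrite [in next _ v]last_q next_cons_last // setUC.
Qed.

(* The cycle of a unicyclic graph is its only detour: an edge [{x, y}] that is
   not of the form [{w, parent w}] would close a second path between [x] and [y]. *)
Lemma edge_parent x y : e x y -> exists w, [set x; y] = [set w; parent w].
Proof.
move=> exy.
suff /existsP[w /eqP xy_w] : [exists w, [set x; y] == [set w; parent w]] by exists w.
apply: contraT => /existsPn no_w; exfalso.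
have not_xy w : [set w; parent w] != [set x; y] by rewrite eq_sym no_w.
pose r := [rel a b | e a b && ([set a; b] != [set x; y])].
have r_parent w : r w (parent w) by rewrite /= adj_parent not_xy.
have r_sym : symmetric r by move=> a b; rewrite /= e_sym setUC.
have [sx sxc x_sx] := @connect_to_cycle r (fun w _ => r_parent w) x.
have [sy syc y_sy] := @connect_to_cycle r (fun w _ => r_parent w) y.
have sx_sy : connect r sx sy.
  by apply: (@connect_cycle r) => // a ac; rewrite -parent_cycle //; apply: r_parent.
have /(cycle_edge_of_detour exy)/imsetP[w wc xy_w] : connect r x y.
  by rewrite (connect_trans x_sx (connect_trans sx_sy _)) // (sym_connect_sym r_sym).
by move: (not_xy w); rewrite parent_cycle // xy_w eqxx.
Qed.

Lemma adjE x y : e x y = (y == parent x) || (x == parent y).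
Proof.
apply/idP/orP => [exy|[]/eqP->]; last 2 first.
- exact: adj_parent.
- by rewrite e_sym adj_parent.
have [w xy_w] := edge_parent exy.
by case/orP: (set2_eq (adj_neq exy) xy_w) => /andP[/eqP-> /eqP->]; [left|right].
Qed.

Lemma next_next_neq x : x \in c -> next c (next c x) != x.
Proof.
move=> xc; have [i s' rot_c] := rot_to xc.
have := size_c_ge3; rewrite -(size_rot i) rot_c -!(next_rot i c_uniq) rot_c.
have := c_uniq; rewrite -(rot_uniq i) rot_c.
case: s' {rot_c} => [|a [|b s']] //= /andP[]; rewrite !inE !negb_or => /and3P[neq_xa neq_xb _].
case/andP => /andP[neq_ab _] _ _.
by rewrite /next /= eqxx (eq_sym a) (negbTE neq_xa) eqxx eq_sym.
Qed.

Lemma parent_parent_neq x : parent (parent x) != x.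
Proof.
have [xc|xNc] := boolP (x \in c); first by rewrite !parent_cycle ?mem_next ?next_next_neq.
have [pc|pNc] := boolP (parent x \in c).
  by apply: contraNneq xNc => <-; rewrite parent_in_cycle.
have := ltn_trans (cdist_parent pNc) (cdist_parent xNc).
by apply: contraTneq => ->; rewrite ltnn.
Qed.

Definition children x := [set y | parent y == x].
Definition tree_children x := [set y | (y \notin c) && (parent y == x)].
Definition off_cycle := [set y | y \notin c].

Lemma deg_parent x : deg e x = #|children x|.+1.
Proof.
rewrite /deg; have -> : [set y | e x y] = parent x |: children x.
  by apply/setP => y; rewrite !inE adjE (eq_sym x).
by rewrite cardsU1 inE parent_parent_neq.
Qed.

Lemma parent_cycle_eq x y : x \in c -> (parent y == x) && (y \in c) = (y == prev c x).
Proof.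
move=> xc; apply/andP/eqP => [[/eqP<- yc]|->].
  by rewrite parent_cycle // prev_next ?c_uniq.
by rewrite mem_prev parent_cycle ?mem_prev // next_prev ?c_uniq.
Qed.

Lemma deg_cycle x : x \in c -> deg e x = #|tree_children x|.+2.
Proof.
move=> xc; rewrite deg_parent.
have -> : children x = prev c x |: tree_children x.
  apply/setP => y; rewrite !inE -(parent_cycle_eq y xc).
  by case: (y \in c); rewrite /= ?andbT ?andbF ?orbF.
by rewrite cardsU1 inE mem_prev xc.
Qed.

Lemma child_off_cycle x y : parent y = x -> x \notin c -> y \notin c.
Proof. by move=> <-; apply: contra; apply: parent_in_cycle. Qed.

Lemma children_off_cycle x : x \notin c -> children x \subset off_cycle :\ x.
Proof.
move=> xNc; apply/subsetP => y; rewrite !inE => /eqP parent_y.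
rewrite (child_off_cycle parent_y xNc) andbT.
by apply: contraTneq (adj_parent y) => yx; rewrite parent_y yx e_irr.
Qed.

Lemma deg_off_cycle_le x : x \notin c -> deg e x <= #|off_cycle|.
Proof.
move=> xNc; rewrite deg_parent (cardsD1 x off_cycle) inE xNc add1n.
exact: subset_leq_card (children_off_cycle xNc).
Qed.

(* The children of [x] and of [parent x] are distinct vertices off the cycle. *)
Lemma deg_tree_edge_le x : x \notin c ->
  deg e x + deg e (parent x) <=
    (if parent x \in c then #|off_cycle| + 3 else #|off_cycle| + 1).
Proof.
move=> xNc; set z := parent x.
have neq_xz : x != z by rewrite adj_neq ?adj_parent.
have sub_x := children_off_cycle xNc.
have [zc|zNc] := ifPn.
  rewrite deg_parent deg_cycle //.
  suff : #|children x| + #|tree_children z| <= #|off_cycle| by lia.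
  apply: leq_card_disjoint.
    apply/pred0P => y; rewrite !inE; apply/andP => -[/eqP px /andP[_ /eqP pz]].
    by move: neq_xz; rewrite -px -pz eqxx.
  apply/subsetP => y; rewrite !inE => /orP[/eqP parent_y|/andP[-> //]].
  by rewrite (child_off_cycle parent_y xNc).
rewrite !deg_parent.
suff : #|children x| + #|children z| <= #|off_cycle :\ z|.
  by rewrite (cardsD1 z off_cycle) inE zNc; lia.
apply: leq_card_disjoint.
  apply/pred0P => y; rewrite !inE; apply/andP => -[/eqP px /eqP pz].
  by move: neq_xz; rewrite -px -pz eqxx.
apply/subsetP => y; rewrite !inE => /orP[]/eqP parent_y.
  rewrite (child_off_cycle parent_y xNc) andbT.
  by apply: contraTneq (parent_parent_neq x) => yz; rewrite -/z -yz parent_y eqxx.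
rewrite (child_off_cycle parent_y zNc) andbT.
by apply: contraTneq (adj_parent y) => yz; rewrite parent_y yz e_irr.
Qed.

Lemma sum_tree_children_le : \sum_(x <- c) #|tree_children x| <= #|off_cycle|.
Proof.
rewrite big_uniq ?c_uniq // (eq_bigr (fun x => \sum_(y | (y \notin c) && (parent y == x)) 1));
  last by move=> x _; rewrite -sum1_card; apply: eq_bigl => y; rewrite inE.
rewrite (exchange_big_dep (fun y => y \notin c)) /=; last by move=> x y _ /andP[].
rewrite -sum1_card [X in _ <= X](eq_bigl (fun y => y \notin c)); last by move=> y; rewrite inE.
apply: leq_sum => y _; rewrite sum1_card.
apply: leq_trans (subset_leq_card (B := pred1 (parent y)) _) _; last by rewrite card1.
by apply/subsetP => x; rewrite !inE => /andP[_ /andP[_ /eqP<-]].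
Qed.

Lemma card_off_cycle : #|off_cycle| = #|T| - size c.
Proof.
rewrite -(cardC (mem c)) (card_uniqP c_uniq) addKn.
by apply: eq_card => y; rewrite !inE.
Qed.

Lemma size_c_le : size c <= #|T|.
Proof. by rewrite -(card_uniqP c_uniq) max_card. Qed.

(* [hub s]: [G] is the cycle with all remaining vertices pendant at [s],
   i.e. [G] is a copy of [U_{n,g}] with [s] in the role of vertex 0. *)
Definition hub s := s \in c /\ forall y, y \notin c -> parent y = s.

Lemma hub_of_deg x : #|off_cycle| + 2 <= deg e x -> hub x.
Proof.
move=> deg_x; have [xc|xNc] := boolP (x \in c); last first.
  by have := deg_off_cycle_le xNc; lia.
split=> // y yNc; move: deg_x; rewrite deg_cycle // => deg_x.
have sub_x : tree_children x \subset off_cycle.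
  by apply/subsetP => z; rewrite !inE => /andP[].
have : tree_children x == off_cycle by rewrite eqEcard sub_x /=; lia.
move=> /eqP eq_x; have : y \in off_cycle by rewrite inE.
by rewrite -eq_x inE => /andP[_ /eqP].
Qed.

Section Hub.
Variable s : T.
Hypothesis hub_s : hub s.

Lemma hub_in_cycle : s \in c.
Proof. by case: hub_s. Qed.

Lemma parent_off_cycle_hub y : y \notin c -> parent y = s.
Proof. by case: hub_s => _; apply. Qed.

Lemma deg_off_cycle_hub y : y \notin c -> deg e y = 1.
Proof.
move=> yNc; rewrite deg_parent (_ : children y = set0) ?cards0 //.
apply/setP => z; rewrite !inE; apply/negP => /eqP parent_z.
have [zc|zNc] := boolP (z \in c).
  by move: (parent_in_cycle zc); rewrite parent_z (negbTE yNc).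
by move: hub_in_cycle; rewrite -(parent_off_cycle_hub zNc) parent_z (negbTE yNc).
Qed.

Lemma deg_hub : deg e s = #|off_cycle| + 2.
Proof.
rewrite deg_cycle ?hub_in_cycle // -addn2; congr (_ + _); apply: eq_card => z.
rewrite !inE; have [//|zNc] := boolP (z \in c).
by rewrite parent_off_cycle_hub ?eqxx.
Qed.

Lemma deg_cycle_hub x : x \in c -> x != s -> deg e x = 2.
Proof.
move=> xc neq_xs; rewrite deg_cycle // (_ : tree_children x = set0) ?cards0 //.
apply/setP => z; rewrite !inE; apply/negP => /andP[zNc /eqP parent_z].
by move: neq_xs; rewrite -parent_z parent_off_cycle_hub ?eqxx.
Qed.

(* The cycle read from the hub gets labels [0 .. g-1], the pendant vertices
   the labels [g .. n-1]; this is the vertex numbering of [Urel]. *)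
Let cs := rot (index s c) c.

Definition hub_label x : nat :=
  if x \in c then index x cs else size c + index x (enum off_cycle).

Lemma index_cs_lt u : u \in c -> index u cs < size c.
Proof. by move=> uc; rewrite -(size_rot (index s c)) index_mem mem_rot. Qed.

Lemma index_cs_eq x y : x \in c -> y \in c -> (index x cs == index y cs) = (x == y).
Proof.
move=> xc yc; apply/eqP/eqP => [|-> //].
by apply: (@index_inj _ x); rewrite /cs mem_rot.
Qed.

Lemma index_cs_eq0 u : (index u cs == 0) = (u == s).
Proof. by rewrite /cs rot_index ?hub_in_cycle //= (eq_sym u); case: (s == u). Qed.

Lemma index_cs_next u : u \in c -> index (next c u) cs = (index u cs).+1 %% size c.
Proof.
move=> uc; rewrite -(next_rot (index s c) c_uniq) -(size_rot (index s c) c).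
by rewrite index_next ?rot_uniq ?c_uniq ?mem_rot.
Qed.

Lemma hub_label_lt x : hub_label x < #|T|.
Proof.
rewrite -(subnKC size_c_le) -card_off_cycle /hub_label.
have [xc|xNc] := ifPn; first exact: leq_trans (index_cs_lt xc) (leq_addr _ _).
by rewrite ltn_add2l cardE index_mem mem_enum inE.
Qed.

Definition hub_ord x : 'I_#|T| := Ordinal (hub_label_lt x).

Lemma hub_ord_bij : bijective hub_ord.
Proof.
apply: inj_card_bij; last by rewrite card_ord.
move=> x y /(congr1 val); rewrite /= /hub_label.
have [xc|xNc] := ifPn; have [yc|yNc] := ifPn.
- by move/eqP; rewrite index_cs_eq // => /eqP.
- by have := index_cs_lt xc; lia.
- by have := index_cs_lt yc; lia.
by move/addnI; apply: (@index_inj _ x); rewrite mem_enum inE.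
Qed.

Lemma Urel_hub_ord x y : Urel #|T| (size c) (hub_ord x) (hub_ord y) = e x y.
Proof.
rewrite /Urel /= /hub_label adjE.
have big_lt a : (size c + a < size c) = false by rewrite ltnNge leq_addr.
have big_neq0 a : (size c + a == 0) = false by apply/eqP; have := size_c_ge3; lia.
have cs_ge u : u \in c -> (size c <= index u cs) = false.
  by move=> uc; rewrite leqNgt index_cs_lt.
have off_neq_hub u : u \notin c -> (u == s) = false.
  by move=> uNc; apply: contraNF uNc => /eqP->; exact: hub_in_cycle.
have off_neq_parent u v : u \in c -> v \notin c -> (v == parent u) = false.
  by move=> uc vNc; apply: contraNF vNc => /eqP->; exact: parent_in_cycle.
have [xc|xNc] := ifPn; have [yc|yNc] := ifPn.
- rewrite !index_cs_lt // !cs_ge // /= !andbF !orbF.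
  by rewrite -!index_cs_next // !index_cs_eq ?mem_next // !parent_cycle.
- rewrite big_lt big_neq0 leq_addr index_cs_eq0 (parent_off_cycle_hub yNc) /=.
  by rewrite andbF andbT !orbF off_neq_parent.
- rewrite big_lt big_neq0 leq_addr index_cs_eq0 (parent_off_cycle_hub xNc) /= andbT.
  by rewrite off_neq_parent ?orbF.
by rewrite big_lt !big_neq0 /= !parent_off_cycle_hub // !off_neq_hub.
Qed.

Lemma hub_iso : graph_iso e (Urel #|T| (size c)).
Proof. by exists hub_ord; split; [exact: hub_ord_bij | exact: Urel_hub_ord]. Qed.

End Hub.

Lemma iso_hub : graph_iso e (Urel #|T| (size c)) -> exists s, hub s.
Proof.
case=> f [bij_f f_hom]; have [g fK gK] := bij_f.
have n0 : 0 < #|T| by rewrite (leq_trans _ size_c_le) // (leq_trans _ size_c_ge3).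
exists (g (Ordinal n0)); apply: hub_of_deg.
by rewrite -(deg_bij bij_f f_hom) gK deg_Urel0 ?size_c_ge3 ?size_c_le // card_off_cycle.
Qed.

Section SomborIndex.
Variable R : realType.
Local Open Scope ring_scope.

Definition edge_weight x y : R := Num.sqrt ((deg e x)%:R ^+ 2 + (deg e y)%:R ^+ 2).

Lemma edge_weightE x y : edge_weight x y = Num.sqrt ((deg e x ^ 2 + deg e y ^ 2)%N%:R).
Proof. by rewrite /edge_weight natrD !natrX. Qed.

Lemma sombor_parent : sombor R e = \sum_x edge_weight x (parent x).
Proof.
have split_x x : \sum_(y | e x y) edge_weight x y =
    edge_weight x (parent x) + \sum_(y | parent y == x) edge_weight x y.
  rewrite (bigD1 (parent x)) ?adj_parent //=; congr (_ + _); apply: eq_bigl => y.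
  rewrite adjE; have [->|neq_y] := eqVneq y (parent x).
    by rewrite (negbTE (parent_parent_neq x)).
  by rewrite eq_sym andbT.
have children_sum :
    \sum_x \sum_(y | parent y == x) edge_weight x y = \sum_y edge_weight y (parent y).
  rewrite (exchange_big_dep xpredT) //=; apply: eq_bigr => y _.
  by rewrite (big_pred1 (parent y)) => [|x]; rewrite /edge_weight 1?addrC 1?eq_sym.
rewrite /sombor (eq_bigr _ (fun x _ => split_x x)) big_split /= children_sum.
by set S := \sum_x _; lra.
Qed.

Lemma sombor_cycle_tree : sombor R e =
  \sum_(x in c) edge_weight x (next c x) + \sum_(x | x \notin c) edge_weight x (parent x).
Proof.
rewrite sombor_parent (bigID (mem c)) /=; congr (_ + _).
by apply: eq_bigr => x xc; rewrite parent_cycle.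
Qed.

(* The weight of a pendant edge at a vertex of degree [#|off_cycle| + 2]. *)
Definition pendant_weight : R := Num.sqrt ((#|off_cycle| + 2)%N%:R ^+ 2 + 1).

Lemma pendant_weightE : pendant_weight = Num.sqrt (((#|off_cycle| + 2) ^ 2 + 1)%N%:R).
Proof. by rewrite /pendant_weight [in RHS]natrD natrX. Qed.

Lemma tree_edge_weight_le x : x \notin c -> edge_weight x (parent x) <= pendant_weight.
Proof.
move=> xNc; rewrite edge_weightE pendant_weightE ler_sqrt // ler_nat.
have := deg_tree_edge_le xNc; rewrite !deg_parent.
by case: (parent x \in c); nia.
Qed.

Lemma tree_weight_le :
  \sum_(x | x \notin c) edge_weight x (parent x) <= #|off_cycle|%:R * pendant_weight.
Proof.
apply: le_trans (ler_sum _ (fun x => @tree_edge_weight_le x)) _.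
by rewrite sumr_const mulr_natl cardsE.
Qed.

Lemma cycle_weight_le : \sum_(x in c) edge_weight x (next c x) <=
  2 * psi (#|off_cycle| + 2)%N%:R + ((size c)%:R - 2) * psi 2.
Proof.
pose psi_deg x := psi (deg e x)%:R : R.
have card_c : #|mem c| = size c := card_uniqP c_uniq.
have deg_ge2 x : x \in c -> 2 <= (deg e x)%:R :> R.
  by move=> xc; rewrite deg_cycle // (ler_nat R 2).
have psi_degE x : x \in c -> psi_deg x = psi 2 + psi_gain R #|tree_children x|.
  by move=> xc; rewrite /psi_deg deg_cycle // /psi_gain -addn2 natrD addrC; lra.
have sum_next : \sum_(x in c) psi_deg (next c x) = \sum_(x in c) psi_deg x.
  rewrite [RHS](reindex_inj (can_inj (prev_next c_uniq))).
  by apply: eq_bigl => x; rewrite mem_next.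
have sum_psi_deg : \sum_(x in c) psi_deg x <= (size c)%:R * psi 2 + psi_gain R #|off_cycle|.
  rewrite (eq_bigr _ psi_degE) big_split /= sumr_const card_c mulr_natl lerD2l.
  rewrite -big_uniq ?c_uniq //; apply: le_trans (psi_gain_sum _ _ _) _.
  exact/psi_gain_le/sum_tree_children_le.
have -> : psi (#|off_cycle| + 2)%N%:R = psi 2 + psi_gain R #|off_cycle|.
  by rewrite /psi_gain natrD addrC; lra.
apply: le_trans (_ : \sum_(x in c) (psi_deg x + psi_deg (next c x) - psi 2) <= _).
  by apply: ler_sum => x xc; apply: sqrt_sqrD_le_psi; rewrite deg_ge2 ?mem_next.
rewrite sumrB big_split /= sum_next sumr_const card_c mulr_natl; lra.
Qed.

Lemma sombor_boundE : sombor_bound R #|T| (size c) =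
  2 * psi (#|off_cycle| + 2)%N%:R + ((size c)%:R - 2) * psi 2
  + #|off_cycle|%:R * pendant_weight.
Proof. by rewrite /sombor_bound -card_off_cycle psi2 /pendant_weight /psi; lra. Qed.

Lemma sombor_le_bound : sombor R e <= sombor_bound R #|T| (size c).
Proof.
rewrite sombor_cycle_tree sombor_boundE.
by have := tree_weight_le; have := cycle_weight_le; lra.
Qed.

Lemma tree_edge_weight_eq x : x \notin c ->
  edge_weight x (parent x) = pendant_weight -> hub (parent x).
Proof.
move=> xNc /eqP; rewrite edge_weightE pendant_weightE eqr_sqrt // eqr_nat => /eqP eq_w.
apply: hub_of_deg; have := deg_tree_edge_le xNc; have := deg_off_cycle_le xNc.
have := deg_parent x; have := deg_parent (parent x).
by case: (parent x \in c); nia.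
Qed.

Lemma sombor_eq_bound_hub : sombor R e = sombor_bound R #|T| (size c) -> exists s, hub s.
Proof.
move=> eq_bound.
have [x xNc|none] := pickP (fun y => y \notin c); last first.
  have [x0 x0c] := c_nonempty; exists x0; split=> // y; by rewrite none.
exists (parent x); apply: (tree_edge_weight_eq xNc).
have eq_tree : \sum_(y | y \notin c) (pendant_weight - edge_weight y (parent y)) = 0.
  rewrite sumrB (_ : \sum_(y | y \notin c) _ = #|off_cycle|%:R * pendant_weight); last first.
    by rewrite sumr_const cardsE mulr_natl.
  move: eq_bound; rewrite sombor_cycle_tree sombor_boundE.
  by have := tree_weight_le; have := cycle_weight_le; lra.
have w_ge0 y : y \notin c -> 0 <= pendant_weight - edge_weight y (parent y).
  by move=> yNc; rewrite subr_ge0 tree_edge_weight_le.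
apply/eqP; rewrite eq_sym -subr_eq0; apply/eqP.
exact: (psumr_eq0P w_ge0 eq_tree xNc).
Qed.

Section HubWeight.
Variable s : T.
Hypothesis hub_s : hub s.

Lemma hub_tree_weight :
  \sum_(x | x \notin c) edge_weight x (parent x) = #|off_cycle|%:R * pendant_weight.
Proof.
rewrite (eq_bigr (fun=> pendant_weight)) ?sumr_const ?cardsE ?mulr_natl // => x xNc.
rewrite /edge_weight /pendant_weight (parent_off_cycle_hub hub_s xNc).
by rewrite (deg_off_cycle_hub hub_s xNc) deg_hub // expr1n addrC.
Qed.

Lemma hub_cycle_weight : \sum_(x in c) edge_weight x (next c x) =
  2 * psi (#|off_cycle| + 2)%N%:R + ((size c)%:R - 2) * psi 2.
Proof.
have sc := hub_in_cycle hub_s; set l := prev c s.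
have lc : l \in c by rewrite mem_prev.
have next_l : next c l = s by rewrite next_prev ?c_uniq.
have neq_next : next c s != s by rewrite eq_sym -parent_cycle ?adj_neq ?adj_parent.
have neq_ls : l != s by apply: contraNneq neq_next => eq_ls; rewrite -{1}eq_ls next_l.
have deg2 x : x \in c -> x != s -> (deg e x)%:R = 2 :> R.
  by move=> xc neq_xs; rewrite (deg_cycle_hub hub_s).
rewrite (bigD1 s) //= (bigD1 l) /=; last by rewrite lc neq_ls.
rewrite next_l /edge_weight deg_hub // !deg2 ?mem_next //.
rewrite (eq_bigr (fun=> psi 2 : R)) => [|x /andP[/andP[xc neq_xs] neq_xl]]; last first.
  rewrite !deg2 ?mem_next //; first by rewrite /psi; congr Num.sqrt; ring.
  by apply: contraNneq neq_xl => next_x; rewrite /l -next_x prev_next ?c_uniq.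
have card_rest : #|[pred x | (x \in c) && (x != s) && (x != l)]| = (size c - 2)%N.
  rewrite -(card_uniqP c_uniq) (cardD1 s (mem c)) (cardD1 l [predD1 (mem c) & s]).
  rewrite !inE sc lc neq_ls /= add1n add1n subn2 /=.
  by apply: eq_card => x; rewrite !inE; case: (x \in c) (x != s) (x != l) => [] [] [].
rewrite (eq_bigl [pred x | (x \in c) && (x != s) && (x != l)]) //.
rewrite sumr_const card_rest -[psi 2 *+ _]mulr_natl.
rewrite natrB; last by have := size_c_ge3; lia.
rewrite /psi (_ : 2 ^+ 2 = 4 :> R) ?[4 + _ ^+ 2]addrC; last by rewrite -natrX.
lra.
Qed.

Lemma hub_sombor_eq_bound : sombor R e = sombor_bound R #|T| (size c).
Proof. by rewrite sombor_cycle_tree hub_cycle_weight hub_tree_weight sombor_boundE. Qed.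

End HubWeight.

End SomborIndex.

End UnicyclicGraph.

Local Open Scope ring_scope.

Theorem theorem3p4 (R : realType) (T : finType) (e : rel T)
  (e_sym : symmetric e) (e_irr : irreflexive e) (c : seq T)
  (hU : unicyclic_with_cycle e c) :
  sombor R e <= sombor_bound R #|T| (size c) /\
  (sombor R e = sombor_bound R #|T| (size c) <->
   graph_iso e (Urel #|T| (size c))).
Proof.
split; first exact: sombor_le_bound.
split=> [/(sombor_eq_bound_hub e_sym e_irr hU)|/(iso_hub e_sym e_irr hU)] [s hub_s].
  exact: hub_iso hub_s.
exact: hub_sombor_eq_bound hub_s.
Qed.
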